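(* Let $V$ be a finite set. Let $\mathcal{Q}:=\{\hat X\in\mathbb{S}^{\{0\}\cup V}_+ : \hat X_{00}=1,\ \hat X_{ii}=\hat X_{0i}\ \forall i\in V\}$, $\mathcal{Q}':=\{\hat X\in\mathcal{Q} : \hat X[V]\ge 0 \text{ entrywise}\}$, and $\mathcal{Q}'':=\{\hat X\in\mathcal{Q} : (e_0-e_i)^{\mathsf T}\hat X(e_0-e_j)\ge 0\ \forall ij\in\binom{V}{2}\}$. Let $\hat{\mathcal{C}}\in\{\mathcal{Q},\mathcal{Q}',\mathcal{Q}''\}$. Then a point $\hat X$ of $\hat{\mathcal{C}}$ is a vertex of $\hat{\mathcal{C}}$ if and only if $\operatorname{rank}(\hat X)=1$. Thus the vertices of $\hat{\mathcal{C}}$ are precisely the matrices $(1\oplus\chi^S)(1\oplus\chi^S)^{\mathsf T}$ with $S\subseteq V$.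
   Context: $0$ is a new index not in $V$; $\mathbb{S}^{W}_+$ denotes real symmetric positive semidefinite matrices indexed by $W$, with trace inner product; $e_i$ are standard basis vectors of $\mathbb{R}^{\{0\}\cup V}$; $\hat X[V]$ is the principal submatrix indexed by $V$. $\chi^S$ is the incidence vector of $S$ and $1\oplus\chi^S\in\mathbb{R}^{\{0\}\cup V}$ has $0$-entry $1$. For a convex set $\mathcal{C}$ in a finite-dimensional space $\mathbb{E}$ and $\bar x\in\mathcal{C}$, the normal cone is $N_{\mathcal{C}}(\bar x):=\{c : \langle c,x\rangle\le\langle c,\bar x\rangle\ \forall x\in\mathcal{C}\}$; $\bar x$ is a vertex if $\dim N_{\mathcal{C}}(\bar x)=\dim\mathbb{E}$. *)

From HB Require Import structures.
From mathcomp Require Import all_boot all_order all_algebra.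
From mathcomp Require Import reals.
Set Implicit Arguments. Unset Strict Implicit. Unset Printing Implicit Defensive.
Import Order.TTheory GRing.Theory Num.Theory.
Local Open Scope ring_scope.

(* The ground set V is 'I_n; the index set {0} u V is 'I_n.+1, where the
   new index 0 is ord0 and i \in V is identified with (lift ord0 i). *)

Section Defs.
Variable R : realType.
Variable n : nat.

Notation MX := 'M[R]_(n.+1).

Definition vidx (i : 'I_n) : 'I_n.+1 := lift ord0 i.

Definition ebas (k : 'I_n.+1) : 'cV[R]_(n.+1) := delta_mx k 0.

Definition symmetric (A : MX) : Prop := A^T = A.

Definition psd (A : MX) : Prop :=
  symmetric A /\ forall x : 'cV[R]_(n.+1), 0 <= (x^T *m A *m x) 0 0.

Definition trinner (A B : MX) : R := \tr (A^T *m B).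

Definition inQ (X : MX) : Prop :=
  psd X /\ X ord0 ord0 = 1 /\ forall i : 'I_n, X (vidx i) (vidx i) = X ord0 (vidx i).

Definition inQ' (X : MX) : Prop :=
  inQ X /\ forall i j : 'I_n, 0 <= X (vidx i) (vidx j).

Definition inQ'' (X : MX) : Prop :=
  inQ X /\ forall i j : 'I_n, i != j ->
    0 <= ((ebas ord0 - ebas (vidx i))^T *m X *m (ebas ord0 - ebas (vidx j))) 0 0.

Inductive which := WQ | WQ' | WQ''.

Definition Chat (c : which) : MX -> Prop :=
  match c with WQ => inQ | WQ' => inQ' | WQ'' => inQ'' end.

Definition normal_cone (K : MX -> Prop) (Xb : MX) (C : MX) : Prop :=
  symmetric C /\ forall X, K X -> trinner C X <= trinner C Xb.

(* dim N = dim E, for N a subset of E: the affine hull of N is all of E,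
   i.e. every element of E is an affine combination of finitely many
   elements of N. *)
Definition full_dim (N : MX -> Prop) : Prop :=
  forall M : MX, symmetric M ->
    exists (k : nat) (Cs : 'I_k -> MX) (w : 'I_k -> R),
      (forall i, N (Cs i)) /\ \sum_(i < k) w i = 1 /\
      M = \sum_(i < k) w i *: Cs i.

Definition is_vertex (K : MX -> Prop) (Xb : MX) : Prop :=
  K Xb /\ full_dim (normal_cone K Xb).

Definition lifted_incidence (S : {set 'I_n}) : 'cV[R]_(n.+1) :=
  \col_(k < n.+1) (if unlift ord0 k is Some i then (i \in S)%:R else 1).

End Defs.

(* A point of [Q] with 0/1 diagonal is the moment matrix [v v^T] of
   [v = 1 (+) chi^S]: positive semidefiniteness forces row [i] to vanish when
   [X_ii = 0] and to copy row [0] when [X_ii = 1]; rank one forces the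
   diagonal to be 0/1 through the minor [X_ii X_00 = X_i0 X_0i].  Such a
   [v v^T] is a vertex: its normal cone contains [E_00], the matrices
   [E_ii - (E_0i + E_i0)/2] (constant on [Q]) and [-u u^T] for [u] orthogonal
   to [v], which together span all symmetric matrices.  A point with a
   fractional diagonal entry is not a vertex: it lies on a curve
   [A_s X A_s^T] (rescaled) inside the set with nonzero tangent [D], and every
   normal vector is orthogonal to [D], so the normal cone is not
   full-dimensional.  For [Q'] the curve only multiplies the entries on [V] by
   positive factors; [Q''] is reduced to [Q'] by the symmetry [x |-> 1 - x]. *)

From Pilot Require Import Defs.
From HB Require Import structures.
From mathcomp Require Import all_boot all_order all_algebra.
From mathcomp Require Import reals.
From mathcomp Require Import ring lra.
Import Order.TTheory GRing.Theory Num.Theory.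
Local Open Scope ring_scope.
Set Implicit Arguments. Unset Strict Implicit. Unset Printing Implicit Defensive.

Lemma lin_quad_le0_eq0 (R : realFieldType) (a b e : R) : 0 < e ->
  (forall t, `|t| < e -> t * a + t ^+ 2 * b <= 0) -> a = 0.
Proof.
move=> e_gt0 le0; apply/eqP/negPn/negP => a_neq0.
have a_gt0 : 0 < `|a| by rewrite normr_gt0.
have b1_gt0 : 0 < `|b| + 1 by rewrite ltr_wpDl.
pose t := Num.min (e / 2) (`|a| / (`|b| + 1)).
have t_gt0 : 0 < t by rewrite lt_min !divr_gt0.
have t_lt : `|t| < e.
  by rewrite gtr0_norm // gt_min ltr_pdivrMr // mulr_natr mulr2n ltrDr e_gt0.
have tb_le_a : t * (`|b| + 1) <= `|a|.
  by rewrite -ler_pdivlMr // ge_min lexx orbT.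
have tb : - (t ^+ 2 * `|b|) <= t ^+ 2 * b.
  by rewrite -mulrN ler_wpM2l ?sqr_ge0 // lerNnormlW.
have ta_le : t * `|a| <= t ^+ 2 * `|b|.
  have := le0 _ t_lt; have := le0 (- t); rewrite normrN sqrrN => /(_ t_lt).
  by case: (ger0P a) => _; lra.
have := ler_wpM2l (ltW t_gt0) tb_le_a.
have : 0 < t ^+ 2 by rewrite exprn_gt0.
rewrite expr2 in ta_le *; lra.
Qed.

Section Forms.
Variable R : realType.
Variable n : nat.
Notation MX := 'M[R]_(n.+1).
Notation CV := 'cV[R]_(n.+1).
Implicit Types (X M : MX) (u w : CV) (a b : 'I_n.+1).

Definition bform u w X : R := (u^T *m X *m w) 0 0.

Lemma bform_ebas X a b : bform (ebas R a) (ebas R b) X = X a b.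
Proof. by rewrite /bform /ebas trmx_delta -rowE -colE !mxE. Qed.

Lemma bformDl u1 u2 w X : bform (u1 + u2) w X = bform u1 w X + bform u2 w X.
Proof. by rewrite /bform raddfD !mulmxDl mxE. Qed.

Lemma bformDr u w1 w2 X : bform u (w1 + w2) X = bform u w1 X + bform u w2 X.
Proof. by rewrite /bform !mulmxDr mxE. Qed.

Lemma bformZl (k : R) u w X : bform (k *: u) w X = k * bform u w X.
Proof. by rewrite /bform linearZ -!scalemxAl mxE. Qed.

Lemma bformZr (k : R) u w X : bform u (k *: w) X = k * bform u w X.
Proof. by rewrite /bform -!scalemxAr mxE. Qed.

Lemma bformBl u1 u2 w X : bform (u1 - u2) w X = bform u1 w X - bform u2 w X.
Proof. by rewrite -scaleN1r bformDl bformZl mulN1r. Qed.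

Lemma bformBr u w1 w2 X : bform u (w1 - w2) X = bform u w1 X - bform u w2 X.
Proof. by rewrite -scaleN1r bformDr bformZr mulN1r. Qed.

Lemma bformC u w X : Defs.symmetric X -> bform u w X = bform w u X.
Proof.
move=> symX; rewrite /bform -[in LHS](trmxK (u^T *m X *m w)) mxE.
by rewrite !trmx_mul trmxK symX mulmxA.
Qed.

Lemma bform_conj (A : MX) u w X :
  bform u w (A *m X *m A^T) = bform (A^T *m u) (A^T *m w) X.
Proof. by rewrite /bform trmx_mul trmxK !mulmxA. Qed.

Lemma bform_outer (v : CV) u w :
  bform u w (v *m v^T) = (u^T *m v) 0 0 * (w^T *m v) 0 0.
Proof.
rewrite /bform mulmxA -mulmxA [in LHS]mxE big_ord1.
by rewrite -[w in v^T *m w]trmxK -trmx_mul [X in _ * X]mxE.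
Qed.

Lemma ebasT_mul p (A : 'M[R]_(n.+1, p)) a (j : 'I_p) : ((ebas R a)^T *m A) 0 j = A a j.
Proof. by rewrite /ebas trmx_delta -rowE mxE. Qed.

Lemma mul_ebas p (A : 'M[R]_(p, n.+1)) (i : 'I_p) b : (A *m ebas R b) i 0 = A i b.
Proof. by rewrite /ebas -colE mxE. Qed.

Lemma ebas_entry a b : ebas R b a 0 = (a == b)%:R.
Proof. by rewrite /ebas mxE eqxx andbT eq_sym. Qed.

Lemma entry_trmx p r (M : 'M[R]_(p, r)) i j : M i j = M^T j i.
Proof. by rewrite mxE. Qed.

Lemma sym_entry X a b : Defs.symmetric X -> X a b = X b a.
Proof. by move=> /matrixP symX; rewrite -(symX b a) mxE. Qed.

(* A vector isotropic for a psd form lies in its kernel: otherwise moving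
   along [u + t w] makes the form negative to first order in [t]. *)
Lemma psd_isotropic_ker X u : psd X -> bform u u X = 0 -> forall w, bform w u X = 0.
Proof.
move=> [symX X_psd] uu0 w.
suff: - (2 * bform w u X) = 0 by lra.
apply: (@lin_quad_le0_eq0 _ _ (- bform w w X) 1) => // t _.
have := X_psd (u + t *: w).
rewrite -/(bform _ _ X) !bformDl !bformDr !bformZl !bformZr uu0 (bformC u w symX).
nra.
Qed.

End Forms.

Section Q.
Variable R : realType.
Variable n : nat.
Notation MX := 'M[R]_(n.+1).
Implicit Types (X : MX) (i : 'I_n) (a b : 'I_n.+1).

Lemma vidx_neq0 i : vidx i != 0.
Proof. by apply/eqP => /(congr1 val). Qed.

Lemma Chat_inQ c X : Chat c X -> inQ X.
Proof. by case: c => //= -[]. Qed.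

Lemma inQ_psd X : inQ X -> psd X.
Proof. by case. Qed.

Lemma inQ_sym X : inQ X -> Defs.symmetric X.
Proof. by case=> [[]]. Qed.

Lemma inQ_00 X : inQ X -> X 0 0 = 1.
Proof. by case=> _ []. Qed.

Lemma inQ_0v X i : inQ X -> X 0 (vidx i) = X (vidx i) (vidx i).
Proof. by case=> _ [] _ ->. Qed.

Lemma inQ_v0 X i : inQ X -> X (vidx i) 0 = X (vidx i) (vidx i).
Proof. by move=> QX; rewrite sym_entry ?inQ_0v //; apply: inQ_sym. Qed.

Lemma bform_e0B X a b :
  bform (ebas R 0 - ebas R a) (ebas R 0 - ebas R b) X = X 0 0 - X 0 b - X a 0 + X a b.
Proof. by rewrite bformBl !bformBr !bform_ebas; ring. Qed.

Lemma inQ_bform_e0B X i :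
  inQ X -> bform (ebas R 0 - ebas R (vidx i)) (ebas R 0 - ebas R (vidx i)) X
           = 1 - X (vidx i) (vidx i).
Proof. by move=> QX; rewrite bform_e0B inQ_00 // inQ_0v // inQ_v0 //; ring. Qed.

Lemma inQ_diag_ge0 X i : inQ X -> 0 <= X (vidx i) (vidx i).
Proof. by move=> /inQ_psd[_ X_psd]; rewrite -bform_ebas X_psd. Qed.

Lemma inQ_diag_le1 X i : inQ X -> X (vidx i) (vidx i) <= 1.
Proof.
move=> QX; have [_ X_psd] := inQ_psd QX.
by rewrite -subr_ge0 -inQ_bform_e0B ?X_psd.
Qed.

Lemma inQ_diag0_row X i : inQ X -> X (vidx i) (vidx i) = 0 ->
  forall b, X (vidx i) b = 0.
Proof.
move=> QX Xii0 b; rewrite -bform_ebas (bformC _ _ (inQ_sym QX)).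
apply: psd_isotropic_ker; [exact: inQ_psd | by rewrite bform_ebas].
Qed.

Lemma inQ_diag1_row X i : inQ X -> X (vidx i) (vidx i) = 1 ->
  forall b, X (vidx i) b = X 0 b.
Proof.
move=> QX Xii1 b; apply/eqP; rewrite eq_sym -subr_eq0; apply/eqP.
rewrite -!bform_ebas -bformBl (bformC _ _ (inQ_sym QX)).
apply: psd_isotropic_ker; [exact: inQ_psd | by rewrite inQ_bform_e0B // Xii1 subrr].
Qed.

End Q.

Section Incidence.
Variable R : realType.
Variable n : nat.
Notation MX := 'M[R]_(n.+1).
Local Notation incv S := (lifted_incidence R S).
Implicit Types (X : MX) (S : {set 'I_n}) (i : 'I_n) (a b : 'I_n.+1).

Definition incmx S : MX := incv S *m (incv S)^T.

Lemma incv_0 S : incv S 0 0 = 1.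
Proof. by rewrite mxE unlift_none. Qed.

Lemma incv_v S i : incv S (vidx i) 0 = (i \in S)%:R.
Proof. by rewrite mxE /vidx liftK. Qed.

Lemma incv_bool S a : incv S a 0 = 0 \/ incv S a 0 = 1.
Proof.
case: (unliftP 0 a) => [i ->|->]; last by rewrite incv_0; right.
by rewrite -/(vidx i) incv_v; case: (i \in S); [right | left].
Qed.

Lemma incmx_entry S a b : incmx S a b = incv S a 0 * incv S b 0.
Proof. by rewrite /incmx !mxE big_ord1 !mxE. Qed.

Lemma incmx_inQ S : inQ (incmx S).
Proof.
split; [split | split].
- by rewrite /Defs.symmetric trmx_mul trmxK.
- by move=> x; rewrite -/(bform _ _ _) bform_outer -expr2 sqr_ge0.
- by rewrite incmx_entry incv_0 mulr1.
- move=> i; rewrite !incmx_entry incv_0 mul1r.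
  by case: (incv_bool S (vidx i)) => ->; rewrite ?mulr0 ?mulr1.
Qed.

Lemma incmx_Chat c S : Chat c (incmx S).
Proof.
have QS := incmx_inQ S.
case: c => //=; split=> // i j.
  rewrite !incmx_entry.
  by case: (incv_bool S (vidx i)) => ->; case: (incv_bool S (vidx j)) => ->;
     rewrite ?mulr0 ?mulr1.
move=> _; rewrite -/(bform _ _ _) bform_e0B !incmx_entry incv_0.
by case: (incv_bool S (vidx i)) => ->; case: (incv_bool S (vidx j)) => ->;
   rewrite ?mulr0 ?mulr1 ?mul0r ?mul1r; lra.
Qed.

Lemma incmx_rank S : \rank (incmx S) = 1%N.
Proof.
apply/eqP; rewrite eqn_leq (leq_trans (mxrankM_maxl _ _) (rank_leq_col _)) /=.
rewrite lt0n mxrank_eq0; apply/eqP => /matrixP /(_ 0 0).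
by rewrite incmx_entry incv_0 mxE mul1r; apply/eqP; rewrite oner_eq0.
Qed.

Lemma inQ_bool_diag_incmx X : inQ X ->
  (forall i, X (vidx i) (vidx i) = 0 \/ X (vidx i) (vidx i) = 1) ->
  X = incmx [set i | X (vidx i) (vidx i) == 1].
Proof.
move=> QX Xbool; set S := [set i | _].
have incvS i : incv S (vidx i) 0 = X (vidx i) (vidx i).
  rewrite incv_v inE; case: (Xbool i) => ->; last by rewrite eqxx.
  by rewrite eq_sym oner_eq0.
have row0 b : X 0 b = incv S b 0.
  case: (unliftP 0 b) => [j ->|->]; last by rewrite incv_0 inQ_00.
  by rewrite -/(vidx j) incvS inQ_0v.
apply/matrixP => a b; rewrite incmx_entry.
case: (unliftP 0 a) => [i ->|->]; last by rewrite incv_0 mul1r row0.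
rewrite -/(vidx i) incvS; case: (Xbool i) => Xii; rewrite Xii.
  by rewrite mul0r (inQ_diag0_row QX Xii).
by rewrite mul1r (inQ_diag1_row QX Xii) row0.
Qed.

Lemma rank1_inQ_bool_diag X : inQ X -> \rank X = 1%N ->
  forall i, X (vidx i) (vidx i) = 0 \/ X (vidx i) (vidx i) = 1.
Proof.
move=> QX rkX i.
have := mulmx_base X; move: (col_base X) (row_base X); rewrite rkX => c r cr.
have minor0 : X (vidx i) (vidx i) * X 0 0 = X (vidx i) 0 * X 0 (vidx i).
  by rewrite -cr !mxE !big_ord1; ring.
move: minor0; rewrite inQ_00 // inQ_0v // inQ_v0 // => /eqP.
rewrite mulr1 -subr_eq0 -{1}(mulr1 (X _ _)) -mulrBr mulf_eq0 subr_eq0.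
by case/orP=> /eqP Xii; [left | right; rewrite -Xii].
Qed.

End Incidence.

Section Span.
Variables (R : pzRingType) (V : lmodType R).
Implicit Types (N : V -> Prop) (M : V).

Definition span_of N M : Prop :=
  exists k (Cs : 'I_k -> V) (w : 'I_k -> R),
    (forall i, N (Cs i)) /\ M = \sum_(i < k) w i *: Cs i.

Lemma span_of0 N : span_of N 0.
Proof. by exists 0%N, (fun _ => 0), (fun _ => 0); split=> [[]//|]; rewrite big_ord0. Qed.

Lemma span_of_mem N M : N M -> span_of N M.
Proof.
by move=> NM; exists 1%N, (fun _ => M), (fun _ => 1); rewrite big_ord1 scale1r.
Qed.

Lemma span_ofD N M1 M2 : span_of N M1 -> span_of N M2 -> span_of N (M1 + M2).
Proof.
move=> [k1 [C1 [w1 [NC1 ->]]]] [k2 [C2 [w2 [NC2 ->]]]].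
exists (k1 + k2)%N, (fun i => match split i with inl a => C1 a | inr b => C2 b end),
  (fun i => match split i with inl a => w1 a | inr b => w2 b end).
split; first by move=> i; case: (split i).
rewrite big_split_ord; congr (_ + _); apply: eq_bigr => i _.
  by rewrite (unsplitK (inl i : 'I_k1 + 'I_k2)).
by rewrite (unsplitK (inr i : 'I_k1 + 'I_k2)).
Qed.

Lemma span_ofZ N (a : R) M : span_of N M -> span_of N (a *: M).
Proof.
move=> [k [C [w [NC ->]]]]; exists k, C, (fun i => a * w i); split=> //.
by rewrite scaler_sumr; apply: eq_bigr => i _; rewrite scalerA.
Qed.

Lemma span_of_sum N k (F : 'I_k -> V) :
  (forall i, span_of N (F i)) -> span_of N (\sum_(i < k) F i).
Proof.
by move=> NF; elim/big_rec: _ => [|i M _]; [exact: span_of0 | exact: span_ofD].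
Qed.

End Span.

Section NormalCone.
Variable R : realType.
Variable n : nat.
Notation MX := 'M[R]_(n.+1).
Notation CV := 'cV[R]_(n.+1).
Implicit Types (C D X M : MX) (u w : CV) (K N : MX -> Prop).

Lemma trinner_outer u w X : trinner (u *m w^T) X = bform u w X.
Proof.
rewrite /trinner trmx_mul trmxK -mulmxA mxtrace_mulC /bform.
by rewrite /mxtrace big_ord1.
Qed.

Lemma trinnerDl C1 C2 X : trinner (C1 + C2) X = trinner C1 X + trinner C2 X.
Proof. by rewrite /trinner raddfD mulmxDl mxtraceD. Qed.

Lemma trinnerZl (k : R) C X : trinner (k *: C) X = k * trinner C X.
Proof. by rewrite /trinner linearZ -scalemxAl mxtraceZ. Qed.

Lemma trinnerNl C X : trinner (- C) X = - trinner C X.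
Proof. by rewrite -scaleN1r trinnerZl mulN1r. Qed.

Lemma trinner_suml k (w : 'I_k -> R) (Cs : 'I_k -> MX) X :
  trinner (\sum_(i < k) w i *: Cs i) X = \sum_(i < k) w i * trinner (Cs i) X.
Proof.
elim/big_rec2: _ => [|i y1 y2 _ <-]; last by rewrite trinnerDl trinnerZl.
by rewrite /trinner linear0 mul0mx mxtrace0.
Qed.

Lemma trinnerDr C X1 X2 : trinner C (X1 + X2) = trinner C X1 + trinner C X2.
Proof. by rewrite /trinner mulmxDr mxtraceD. Qed.

Lemma trinnerZr (k : R) C X : trinner C (k *: X) = k * trinner C X.
Proof. by rewrite /trinner -scalemxAr mxtraceZ. Qed.

Lemma trinner_gt0 D : D != 0 -> 0 < trinner D D.
Proof.
case/matrix0Pn => a [b Dab].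
have colsq_ge0 j : 0 <= \sum_i D i j ^+ 2 by apply: sumr_ge0 => i _; apply: sqr_ge0.
have -> : trinner D D = \sum_j \sum_i D i j ^+ 2.
  by apply: eq_bigr => j _; rewrite mxE; apply: eq_bigr => i _; rewrite mxE expr2.
rewrite lt_def sumr_ge0 ?andbT //; apply/eqP => /psumr_eq0P.
move=> /(_ (fun j _ => colsq_ge0 j) b isT) /psumr_eq0P.
by move=> /(_ (fun i _ => sqr_ge0 _) a isT) /eqP; rewrite sqrf_eq0 (negbTE Dab).
Qed.

Lemma normal_cone0 K X : normal_cone K X 0.
Proof.
split; first by rewrite /Defs.symmetric trmx0.
by move=> Y _; rewrite /trinner trmx0 !mul0mx.
Qed.

(* The normal cone contains [0], so its affine hull is its linear span. *)
Lemma full_dim_of_span K X :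
  (forall M, Defs.symmetric M -> span_of (normal_cone K X) M) ->
  full_dim (normal_cone K X).
Proof.
move=> spanN M symM; have [k [C [w [NC ->]]]] := spanN M symM.
exists k.+1, (fun i => if unlift 0 i is Some j then C j else 0),
  (fun i => if unlift 0 i is Some j then w j else 1 - \sum_(j < k) w j).
split; first by move=> i; case: (unlift 0 i) => [j|] //; apply: normal_cone0.
rewrite !big_ord_recl !unlift_none; split.
  by rewrite [X in _ + X](eq_bigr w) ?subrK // => i _; rewrite liftK.
by rewrite scaler0 add0r; apply: eq_bigr => i _; rewrite liftK.
Qed.

Lemma span_of_sym N :
  (forall a b, span_of N (delta_mx a b + delta_mx b a)) ->
  forall M, Defs.symmetric M -> span_of N M.
Proof.
move=> Ndelta M symM.
have -> : M = 2^-1 *: (M + M^T).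
  by rewrite symM -mulr2n -scaler_nat scalerA mulVf ?scale1r // pnatr_eq0.
apply: span_ofZ.
rewrite [X in X + _]matrix_sum_delta [X in _ + X^T]matrix_sum_delta.
rewrite raddf_sum /= -big_split /=; apply: span_of_sum => a.
rewrite raddf_sum /= -big_split /=; apply: span_of_sum => b.
by rewrite linearZ /= trmx_delta -scalerDr; apply/span_ofZ/Ndelta.
Qed.

(* Any [C] of the normal cone is orthogonal to the tangent [D] of such a
   curve; a full-dimensional cone spans [D] itself, forcing [<D, D> = 0]. *)
Lemma curve_not_vertex K X D E (q e : R) :
  0 < e -> 0 <= q -> Defs.symmetric D -> D != 0 ->
  (forall s, `|s| < e -> K ((1 + s ^+ 2 * q)^-1 *: (X + s *: D + s ^+ 2 *: E))) ->
  ~ is_vertex K X.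
Proof.
move=> e_gt0 q_ge0 symD D_neq0 Kcurve [KX fullN].
have [k [Cs [w [NCs [_ Dsum]]]]] := fullN D symD.
have CsD0 i : trinner (Cs i) D = 0.
  have [_ CsX] := NCs i.
  apply: (@lin_quad_le0_eq0 _ _ (trinner (Cs i) E - q * trinner (Cs i) X) e)
    => // s s_lt.
  have den_gt0 : 0 < 1 + s ^+ 2 * q.
    have : 0 <= s ^+ 2 * q by rewrite mulr_ge0 ?sqr_ge0.
    lra.
  have := CsX _ (Kcurve s s_lt).
  rewrite trinnerZr !trinnerDr !trinnerZr mulrC -ler_pdivlMr ?invr_gt0 // invrK.
  nra.
have : trinner D D = 0.
  by rewrite [X in trinner X D]Dsum trinner_suml big1 // => i _; rewrite CsD0 mulr0.
by move/eqP; rewrite gt_eqF // trinner_gt0.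
Qed.

End NormalCone.

Section IncidenceVertex.
Variable R : realType.
Variable n : nat.
Variable c : which.
Variable S : {set 'I_n}.
Notation MX := 'M[R]_(n.+1).
Notation CV := 'cV[R]_(n.+1).
Local Notation v := (lifted_incidence R S).
Local Notation N := (normal_cone (Chat c) (incmx R S)).
Implicit Types (C X : MX) (u w : CV) (i : 'I_n) (a b : 'I_n.+1).

Lemma outer_entry u w a b : (u *m w^T) a b = u a 0 * w b 0.
Proof. by rewrite mxE big_ord1 mxE. Qed.

Lemma outer_sym u : Defs.symmetric (u *m u^T).
Proof. by rewrite /Defs.symmetric trmx_mul trmxK. Qed.

Definition emx a b : MX := ebas R a *m (ebas R b)^T.

Lemma delta_emx a b : delta_mx a b = emx a b.
Proof. by rewrite /emx /ebas trmx_delta mul_delta_mx. Qed.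

Lemma normal_cone_incmx_const C k : Defs.symmetric C ->
  (forall X, inQ X -> trinner C X = k) -> N C.
Proof.
move=> symC Ck; split=> // X /Chat_inQ QX.
by rewrite (Ck X QX) (Ck _ (incmx_inQ R S)).
Qed.

(* For [u] orthogonal to [v], [<u u^T, X> = u^T X u] is nonnegative on [Q]
   and vanishes at [v v^T]. *)
Lemma normal_cone_incmx_perp u : (u^T *m v) 0 0 = 0 -> N (- (u *m u^T)).
Proof.
move=> uv0; split; first by rewrite /Defs.symmetric linearN /= outer_sym.
move=> X /Chat_inQ QX; rewrite !trinnerNl !trinner_outer bform_outer uv0 mul0r.
by rewrite oppr0 oppr_le0; case: (inQ_psd QX) => _; apply.
Qed.

Lemma span_perp_outer u w : (u^T *m v) 0 0 = 0 -> (w^T *m v) 0 0 = 0 ->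
  span_of N (u *m w^T + w *m u^T).
Proof.
have perpD u1 u2 : ((u1 + u2)^T *m v) 0 0 = (u1^T *m v) 0 0 + (u2^T *m v) 0 0.
  by rewrite raddfD mulmxDl mxE.
have perpN u1 : ((- u1)^T *m v) 0 0 = - (u1^T *m v) 0 0.
  by rewrite linearN mulNmx mxE.
have span_sq u1 : (u1^T *m v) 0 0 = 0 -> span_of N (u1 *m u1^T).
  move=> u1v0; rewrite -[_ *m _]opprK -scaleN1r.
  exact/span_ofZ/span_of_mem/normal_cone_incmx_perp.
move=> uv0 wv0.
have -> : u *m w^T + w *m u^T =
    2^-1 *: ((u + w) *m (u + w)^T + (-1) *: ((u - w) *m (u - w)^T)).
  by apply/matrixP => a b; rewrite !(outer_entry, mxE); field.
apply/span_ofZ/span_ofD; first by apply: span_sq; rewrite perpD uv0 wv0 addr0.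
by apply/span_ofZ/span_sq; rewrite perpD perpN uv0 wv0 subr0.
Qed.

Lemma normal_cone_incmx_e00 : N (emx 0 0).
Proof.
apply: (normal_cone_incmx_const (k := 1)); first exact: outer_sym.
by move=> X QX; rewrite trinner_outer bform_ebas inQ_00.
Qed.

Lemma normal_cone_incmx_diag i :
  N (emx (vidx i) (vidx i) - 2^-1 *: (emx 0 (vidx i) + emx (vidx i) 0)).
Proof.
apply: (normal_cone_incmx_const (k := 0)).
  by apply/matrixP => a b; rewrite /emx !(outer_entry, mxE); ring.
move=> X QX; rewrite trinnerDl trinnerNl trinnerZl trinnerDl !trinner_outer.
by rewrite !bform_ebas inQ_0v // inQ_v0 //; field.
Qed.

Definition perpv i : CV := ebas R (vidx i) - v (vidx i) 0 *: ebas R 0.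

Lemma perpv_perp i : ((perpv i)^T *m v) 0 0 = 0.
Proof.
rewrite /perpv linearB linearZ /= mulmxBl -scalemxAl mxE ebasT_mul.
by rewrite [X in _ + X]mxE [X in - X]mxE ebasT_mul incv_0 mulr1 subrr.
Qed.

Lemma span_incmx_e0v i : span_of N (emx 0 (vidx i) + emx (vidx i) 0).
Proof.
have span_uu := span_perp_outer (perpv_perp i) (perpv_perp i).
have span_F := span_of_mem (normal_cone_incmx_diag i).
case: (incv_bool R S (vidx i)) => vi.
- have -> : emx 0 (vidx i) + emx (vidx i) 0 =
      (perpv i *m (perpv i)^T + perpv i *m (perpv i)^T) + (-2) *:
      (emx (vidx i) (vidx i) - 2^-1 *: (emx 0 (vidx i) + emx (vidx i) 0)).
    by apply/matrixP => a b; rewrite /emx /perpv vi !(outer_entry, mxE); field.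
  by apply: span_ofD; last apply: span_ofZ.
- have -> : emx 0 (vidx i) + emx (vidx i) 0 =
      2 *: (emx (vidx i) (vidx i) - 2^-1 *: (emx 0 (vidx i) + emx (vidx i) 0))
      + 2 *: emx 0 0 + (-1) *: (perpv i *m (perpv i)^T + perpv i *m (perpv i)^T).
    by apply/matrixP => a b; rewrite /emx /perpv vi !(outer_entry, mxE); field.
  apply/span_ofD/span_ofZ/span_uu; apply: span_ofD; apply: span_ofZ => //.
  exact/span_of_mem/normal_cone_incmx_e00.
Qed.

(* With [u_i := e_i - v_i e_0], the matrix [E_ij + E_ji] is
   [u_i u_j^T + u_j u_i^T] corrected along [e_0]. *)
Lemma span_incmx_delta a b : span_of N (delta_mx a b + delta_mx b a).
Proof.
rewrite !delta_emx.
case: (unliftP 0 a) => [i ->|->]; case: (unliftP 0 b) => [j ->|->].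
- have -> : emx (vidx i) (vidx j) + emx (vidx j) (vidx i) =
      (perpv i *m (perpv j)^T + perpv j *m (perpv i)^T)
      + v (vidx j) 0 *: (emx 0 (vidx i) + emx (vidx i) 0)
      + v (vidx i) 0 *: (emx 0 (vidx j) + emx (vidx j) 0)
      + (- (2 * v (vidx i) 0 * v (vidx j) 0)) *: emx 0 0.
    by apply/matrixP => k l; rewrite /emx /perpv !(outer_entry, mxE); ring.
  apply/span_ofD/span_ofZ/span_of_mem/normal_cone_incmx_e00.
  apply/span_ofD/span_ofZ/span_incmx_e0v.
  apply/span_ofD/span_ofZ/span_incmx_e0v.
  exact/span_perp_outer/perpv_perp/perpv_perp.
- by rewrite addrC; apply: span_incmx_e0v.
- exact: span_incmx_e0v.
- by rewrite -mulr2n -scaler_nat; apply/span_ofZ/span_of_mem/normal_cone_incmx_e00.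
Qed.

Lemma incmx_vertex : is_vertex (Chat c) (incmx R S).
Proof.
split; first exact: incmx_Chat.
exact/full_dim_of_span/span_of_sym/span_incmx_delta.
Qed.

End IncidenceVertex.

(* For [0 < Z_kk < 1], the congruences [Y s = A s Z (A s)^T] with
   [A s = 1 + s B], rescaled by [Y s 0 0], form a curve in [Q] through [Z]:
   [B] adds [s (e_k - Z_kk e_0)^T Z] to row 0 and scales each other row [a]
   by [1 + s gam a], where [gam] is chosen so that [Y_0a = Y_aa] persists.
   Entries on [V] are multiplied by positive factors for small [s], and the
   tangent [D] is nonzero since [D_kk = 2 Z_kk (1 - Z_kk)]. *)
Section FractionalCurve.
Variable R : realType.
Variable n : nat.
Notation MX := 'M[R]_(n.+1).
Notation CV := 'cV[R]_(n.+1).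
Variable Z : MX.
Variable k : 'I_n.
Hypothesis QZ : inQ Z.
Hypothesis Zkk_gt0 : 0 < Z (vidx k) (vidx k).
Hypothesis Zkk_lt1 : Z (vidx k) (vidx k) < 1.
Implicit Types (s : R) (i j : 'I_n) (a b : 'I_n.+1).

Let d := Z (vidx k) (vidx k).
Let beta : CV := ebas R (vidx k) - d *: ebas R 0.
Let zb : CV := Z *m beta.
(* Division by [Z_aa = 0] yields [0], harmless since then [zb_a = 0] too. *)
Let gam a : R := zb a 0 / Z a a.
Let B : MX := diag_mx (\row_a gam a) + ebas R 0 *m beta^T.
Let A s : MX := 1%:M + s *: B.
Let Y s : MX := A s *m Z *m (A s)^T.
Let D : MX := B *m Z + Z *m B^T.
Let E : MX := B *m Z *m B^T.
Let q : R := bform beta beta Z.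
Let cf s a : R := 1 + s * gam a.

Let symZ : Defs.symmetric Z. Proof. exact: inQ_sym. Qed.

Let q_ge0 : 0 <= q. Proof. by case: (inQ_psd QZ) => _; apply. Qed.

Lemma zb_entry a : zb a 0 = Z a (vidx k) - d * Z a 0.
Proof.
rewrite -[LHS](ebasT_mul (Z *m beta)) mulmxA -/(bform _ _ _).
by rewrite bformBr bformZr !bform_ebas.
Qed.

Lemma zb0 : zb 0 0 = 0.
Proof. by rewrite zb_entry inQ_00 // mulr1 inQ_0v // subrr. Qed.

Lemma gam_mul a : gam a * Z a a = zb a 0.
Proof.
have [Zaa0|Zaa_neq0] := eqVneq (Z a a) 0; last by rewrite mulfVK.
rewrite Zaa0 mulr0 zb_entry; case: (unliftP 0 a) Zaa0 => [j ->|->] Zjj0.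
  by rewrite !(inQ_diag0_row QZ Zjj0) mulr0 subrr.
by move: Zjj0; rewrite inQ_00 // => /eqP; rewrite oner_eq0.
Qed.

Lemma gam0 : gam 0 = 0.
Proof. by rewrite -[gam 0]mulr1 -(inQ_00 QZ) gam_mul zb0. Qed.

Lemma B_mul_entry p (M : 'M[R]_(n.+1, p)) a (l : 'I_p) :
  (B *m M) a l = gam a * M a l + (a == 0)%:R * (beta^T *m M) 0 l.
Proof.
rewrite /B mulmxDl mxE mul_diag_mx mxE -mulmxA [X in _ + X]mxE big_ord1.
by rewrite ebas_entry mxE.
Qed.

Lemma A_mul_entry p s (M : 'M[R]_(n.+1, p)) a (l : 'I_p) :
  (A s *m M) a l = M a l + s * (B *m M) a l.
Proof. by rewrite /A mulmxDl mul1mx -scalemxAl mxE [X in _ + X]mxE. Qed.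

Lemma betaT_Z b : (beta^T *m Z) 0 b = zb b 0.
Proof. by rewrite [LHS]entry_trmx trmx_mul trmxK symZ. Qed.

Lemma AZ_entry s a b : a != 0 -> (A s *m Z) a b = cf s a * Z a b.
Proof.
move=> /negbTE a_neq0.
by rewrite A_mul_entry B_mul_entry a_neq0 mul0r addr0 /cf; ring.
Qed.

Lemma AZ0_entry s b : (A s *m Z) 0 b = Z 0 b + s * zb b 0.
Proof. by rewrite A_mul_entry B_mul_entry gam0 betaT_Z mul0r mul1r add0r. Qed.

Lemma AZbeta0 s : (A s *m Z *m beta) 0 0 = s * q.
Proof.
rewrite -mulmxA A_mul_entry B_mul_entry -/zb gam0 zb0 mul0r mul1r add0r add0r.
by rewrite /q /bform mulmxA.
Qed.

Lemma Y_entry s a b :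
  Y s a b = cf s a * (A s *m Z) b a + s * ((a == 0)%:R * (A s *m Z *m beta) b 0).
Proof.
have -> : Y s = A s *m (A s *m Z)^T by rewrite /Y trmx_mul symZ mulmxA.
rewrite [in LHS]A_mul_entry [in LHS]B_mul_entry [(beta^T *m _) 0 b]entry_trmx.
by rewrite [(beta^T *m _)^T]trmx_mul !trmxK !mxE /cf; ring.
Qed.

Lemma Y_vv s i j :
  Y s (vidx i) (vidx j) = cf s (vidx i) * cf s (vidx j) * Z (vidx i) (vidx j).
Proof.
rewrite Y_entry (negbTE (vidx_neq0 i)) mul0r mulr0 addr0 AZ_entry ?vidx_neq0 //.
by rewrite (sym_entry _ _ symZ) mulrA.
Qed.

Lemma Y_00 s : Y s 0 0 = 1 + s ^+ 2 * q.
Proof. by rewrite Y_entry eqxx mul1r AZbeta0 AZ0_entry zb0 inQ_00 // /cf gam0; ring. Qed.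

Lemma Y_0v s j : Y s 0 (vidx j) = Y s (vidx j) (vidx j).
Proof.
rewrite Y_entry Y_vv eqxx mul1r AZ_entry ?vidx_neq0 // /cf gam0 mulr0 addr0 mul1r.
rewrite -mulmxA A_mul_entry B_mul_entry (negbTE (vidx_neq0 j)) mul0r addr0 -/zb.
by rewrite inQ_v0 // -gam_mul; ring.
Qed.

Lemma Y_inQ s : inQ ((Y s 0 0)^-1 *: Y s).
Proof.
have symY : Defs.symmetric (Y s).
  by rewrite /Defs.symmetric /Y !trmx_mul trmxK symZ mulmxA.
have Y00_gt0 : 0 < Y s 0 0.
  by rewrite Y_00 ltr_pwDl // mulr_ge0 ?sqr_ge0.
split; [split | split].
- by rewrite /Defs.symmetric linearZ /= symY.
- move=> x; rewrite -scalemxAr -scalemxAl mxE mulr_ge0 ?invr_ge0 ?(ltW Y00_gt0) //.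
  rewrite -/(bform _ _ _) /Y bform_conj.
  by case: (inQ_psd QZ) => _; apply.
- by rewrite mxE mulVf ?gt_eqF.
- by move=> i; rewrite [LHS]mxE [RHS]mxE Y_0v.
Qed.

Lemma Y_expand s : Y s = Z + s *: D + s ^+ 2 *: E.
Proof.
rewrite /Y.
have -> : (A s)^T = 1%:M + s *: B^T by rewrite /A raddfD /= trmx1 linearZ.
rewrite /A /D /E mulmxDl mul1mx !mulmxDr mulmx1.
by rewrite mulmxDl -!scalemxAr -!scalemxAl scalerA scalerDr expr2 !addrA.
Qed.

Lemma D_kk : D (vidx k) (vidx k) = 2 * (d * (1 - d)).
Proof.
rewrite /D mxE.
have -> : (Z *m B^T) (vidx k) (vidx k) = (B *m Z) (vidx k) (vidx k).
  by rewrite [LHS]entry_trmx trmx_mul trmxK symZ.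
rewrite B_mul_entry (negbTE (vidx_neq0 k)) mul0r addr0 gam_mul zb_entry.
by rewrite inQ_v0 // -/d; ring.
Qed.

Lemma D_neq0 : D != 0.
Proof.
apply/eqP => /matrixP /(_ (vidx k) (vidx k)) /eqP.
rewrite D_kk mxE mulf_eq0 pnatr_eq0 /= mulf_eq0 subr_eq0.
by case/orP=> /eqP d01; move: Zkk_gt0 Zkk_lt1; rewrite -/d d01 ltxx // andbF.
Qed.

Let eps : R := (1 + \sum_a `|gam a|)^-1.

Lemma cf_ge0 s a : `|s| < eps -> 0 <= cf s a.
Proof.
move=> s_lt; have gam_le : `|gam a| <= \sum_b `|gam b|.
  by rewrite (bigD1 a) //= lerDl sumr_ge0.
have sum_ge0 : 0 <= \sum_b `|gam b| by apply: sumr_ge0.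
have s_sum_lt1 : `|s| * (1 + \sum_b `|gam b|) < 1.
  by rewrite -ltr_pdivlMr ?mul1r // ltr_wpDr.
have sgam_lt1 : `|s * gam a| < 1.
  rewrite mulrDr mulr1 in s_sum_lt1; rewrite normrM.
  by have := ler_wpM2l (normr_ge0 s) gam_le; have := normr_ge0 s; lra.
by rewrite /cf -(opprK (s * gam a)) subr_ge0 ler_normlW // normrN ltW.
Qed.

Lemma fractional_curve : exists e q0 (D0 E0 : MX),
  [/\ 0 < e, 0 <= q0, Defs.symmetric D0, D0 != 0 &
  forall s, `|s| < e ->
    let X := (1 + s ^+ 2 * q0)^-1 *: (Z + s *: D0 + s ^+ 2 *: E0) in
    inQ X /\ forall i j, 0 <= Z (vidx i) (vidx j) -> 0 <= X (vidx i) (vidx j)].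
Proof.
exists eps, q, D, E; split.
- by rewrite invr_gt0 ltr_wpDr ?sumr_ge0.
- exact: q_ge0.
- by rewrite /Defs.symmetric /D raddfD /= !trmx_mul trmxK symZ addrC.
- exact: D_neq0.
move=> s s_lt /=; rewrite -Y_expand -Y_00; split; first exact: Y_inQ.
move=> i j Zij_ge0; rewrite mxE Y_vv Y_00 mulr_ge0 ?invr_ge0 //.
  by rewrite addr_ge0 // mulr_ge0 // sqr_ge0.
by rewrite !mulr_ge0 ?cf_ge0.
Qed.

End FractionalCurve.

(* Conjugation by [J], where [J^T e_0 = e_0] and [J^T e_i = e_0 - e_i], is
   the symmetry [x |-> 1 - x] of the cube read on moment matrices: it
   preserves [Q], exchanges the constraints of [Q''] with those of [Q'],
   and sends [X_ii] to [1 - X_ii]. *)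
Section Flip.
Variable R : realType.
Variable n : nat.
Notation MX := 'M[R]_(n.+1).
Notation CV := 'cV[R]_(n.+1).
Implicit Types (X M : MX) (i j : 'I_n) (a b : 'I_n.+1).

Definition flipmx : MX :=
  \matrix_(a, b) ((b == 0)%:R - ((a != 0) && (a == b))%:R).

Definition flip X : MX := flipmx *m X *m flipmx^T.

Definition flipv a : CV := ebas R 0 - (a != 0)%:R *: ebas R a.

Lemma flipv_entry a l : flipv a l 0 = (l == 0)%:R - (a != 0)%:R * (l == a)%:R.
Proof. by rewrite /flipv !mxE eqxx !andbT. Qed.

Lemma trflipmx_ebas a : flipmx^T *m ebas R a = flipv a.
Proof.
apply/matrixP => l j; rewrite ord1 mul_ebas flipv_entry !mxE.
case: (a != 0); case: (l =P a) => [->|/eqP l_neq_a]; rewrite ?eqxx /= ?mul1r ?mul0r //.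
by rewrite (eq_sym a) (negbTE l_neq_a) subr0.
Qed.

Lemma flip_entry X a b : flip X a b = bform (flipv a) (flipv b) X.
Proof. by rewrite -bform_ebas /flip bform_conj !trflipmx_ebas. Qed.

Lemma flipv0 : flipv 0 = ebas R 0.
Proof. by rewrite /flipv eqxx scale0r subr0. Qed.

Lemma flipv_v i : flipv (vidx i) = ebas R 0 - ebas R (vidx i).
Proof. by rewrite /flipv vidx_neq0 scale1r. Qed.

Lemma flipmxK : flipmx *m flipmx = 1%:M.
Proof.
apply/matrixP => a b.
have -> : (flipmx *m flipmx) a b = ((flipv a)^T *m (flipmx *m ebas R b)) 0 0.
  by rewrite -trflipmx_ebas trmx_mul trmxK -mulmxA ebasT_mul mulmxA mul_ebas.
rewrite /flipv linearB linearZ /= mulmxBl -scalemxAl [LHS]mxE !ebasT_mul.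
rewrite [X in _ + X]mxE [X in - X]mxE ebasT_mul !mul_ebas !mxE.
case: (a =P 0) => [->|/eqP a_neq0] /=; first by rewrite mul0r !subr0 eq_sym.
by rewrite mul1r subr0 opprB addrC subrK.
Qed.

Lemma flipK X : flip (flip X) = X.
Proof.
by rewrite /flip !mulmxA flipmxK mul1mx -mulmxA -trmx_mul flipmxK trmx1 mulmx1.
Qed.

Lemma flipD X M : flip (X + M) = flip X + flip M.
Proof. by rewrite /flip mulmxDr mulmxDl. Qed.

Lemma flipZ (k : R) X : flip (k *: X) = k *: flip X.
Proof. by rewrite /flip -scalemxAr -scalemxAl. Qed.

Lemma flip_sym X : Defs.symmetric X -> Defs.symmetric (flip X).
Proof.
by move=> symX; rewrite /Defs.symmetric /flip !trmx_mul trmxK symX mulmxA.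
Qed.

Lemma flip_vv X i j :
  flip X (vidx i) (vidx j)
  = bform (ebas R 0 - ebas R (vidx i)) (ebas R 0 - ebas R (vidx j)) X.
Proof. by rewrite flip_entry !flipv_v. Qed.

Lemma flip_diag X i : inQ X -> flip X (vidx i) (vidx i) = 1 - X (vidx i) (vidx i).
Proof. by move=> QX; rewrite flip_vv inQ_bform_e0B. Qed.

Lemma flip_inQ X : inQ X -> inQ (flip X).
Proof.
move=> QX; split; [split | split].
- exact/flip_sym/inQ_sym.
- by move=> x; rewrite -/(bform _ _ _) bform_conj; case: (inQ_psd QX) => _; apply.
- by rewrite flip_entry flipv0 bform_ebas inQ_00.
- move=> i; rewrite flip_diag // flip_entry flipv0 flipv_v bformBr !bform_ebas.
  by rewrite inQ_00 // inQ_0v.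
Qed.

End Flip.

Section Vertices.
Variable R : realType.
Variable n : nat.
Notation MX := 'M[R]_(n.+1).
Implicit Types (X : MX) (c : which) (k : 'I_n).

Lemma fractional_not_vertex c X k : Chat c X ->
  0 < X (vidx k) (vidx k) < 1 -> ~ is_vertex (Chat c) X.
Proof.
move=> CX /andP[Xkk_gt0 Xkk_lt1]; have QX := Chat_inQ CX.
case: c CX => CX; last first.
  have QZ := flip_inQ QX.
  have Zkk_gt0 : 0 < flip X (vidx k) (vidx k) by rewrite flip_diag // subr_gt0.
  have Zkk_lt1 : flip X (vidx k) (vidx k) < 1.
    by rewrite flip_diag // ltrBlDr ltrDl.
  have [e [q [D [E [e_gt0 q_ge0 symD D_neq0 curve]]]]] :=
    fractional_curve QZ Zkk_gt0 Zkk_lt1.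
  have flipD_neq0 : flip D != 0.
    by apply: contraNneq D_neq0 => D0; rewrite -(flipK D) D0 /flip mulmx0 mul0mx.
  apply: (curve_not_vertex (E := flip E) e_gt0 q_ge0 (flip_sym symD) flipD_neq0).
  move=> s /curve[QY Y_ge0]; rewrite -[X]flipK -!flipZ -!flipD -flipZ.
  split=> [|i j i_neq_j]; first exact: flip_inQ.
  rewrite -/(bform _ _ _) -flip_vv flipK Y_ge0 // flip_vv.
  by case: CX => _; apply.
all: have [e [q [D [E [e_gt0 q_ge0 symD D_neq0 curve]]]]] :=
  fractional_curve QX Xkk_gt0 Xkk_lt1.
all: apply: (curve_not_vertex (E := E) e_gt0 q_ge0 symD D_neq0).
all: move=> s /curve[QY Y_ge0] //.
by split=> // i j; apply/Y_ge0; case: CX => _.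
Qed.

Lemma vertex_bool_diag c X : is_vertex (Chat c) X ->
  forall k, X (vidx k) (vidx k) = 0 \/ X (vidx k) (vidx k) = 1.
Proof.
move=> [CX vertX] k; have QX := Chat_inQ CX.
have [Xkk_gt0|] := ltP 0 (X (vidx k) (vidx k)); last first.
  by left; apply/le_anti; rewrite inQ_diag_ge0 // andbT.
have [Xkk_lt1|] := ltP (X (vidx k) (vidx k)) 1; last first.
  by right; apply/le_anti; rewrite inQ_diag_le1.
by case: (fractional_not_vertex (k := k) CX); [apply/andP | split].
Qed.

Lemma vertex_eq_incmx c X : is_vertex (Chat c) X ->
  X = incmx R [set i | X (vidx i) (vidx i) == 1].
Proof.
move=> vertX; have QX := Chat_inQ vertX.1.
exact/(inQ_bool_diag_incmx QX)/vertex_bool_diag/vertX.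
Qed.

End Vertices.

Theorem corollary3p3 (R : realType) (n : nat) (c : which) :
  (forall X : 'M[R]_(n.+1), Chat c X ->
     (is_vertex (Chat c) X <-> \rank X = 1%N)) /\
  (forall X : 'M[R]_(n.+1),
     is_vertex (Chat c) X <->
     exists S : {set 'I_n},
       X = lifted_incidence R S *m (lifted_incidence R S)^T).
Proof.
split=> X.
  move=> CX; have QX := Chat_inQ CX; split=> [/vertex_eq_incmx -> | rkX].
    exact: incmx_rank.
  rewrite (inQ_bool_diag_incmx QX (rank1_inQ_bool_diag QX rkX)).
  exact: incmx_vertex.
split=> [/vertex_eq_incmx -> | [S ->]]; last exact: incmx_vertex.
by eexists.
Qed.
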